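(* In the setting below with $\Phi_\lambda=\Phi_{+,\lambda}$, let $x^*\in\mathbb R^n$ with $\Theta(x^* )<\infty$, let $J_*:=\{i\in[r]:(Bx^*-b)_i\ne0\}$ and $\bar J_*:=[r]\setminus J_*$, and consider the convex program $$(\mathrm P_+)\qquad \min_x\ \Theta(x)\quad\text{s.t.}\quad (Bx-b)_{\bar J_*}\le0.$$ Then: (i) $x^*$ is a stationary point of (P) if and only if it is a KKT point of $(\mathrm P_+)$; (ii) $x^*$ is a local minimizer of $F$ if and only if it is a global minimizer of $(\mathrm P_+)$.
   Context: Let $f:\mathbb R^n\to(-\infty,\infty]$, $g:\mathbb R^m\to(-\infty,\infty]$ be proper, lsc and convex; $A\in\mathbb R^{m\times n}$, $B\in\mathbb R^{r\times n}$, $b\in\mathbb R^r$, $\lambda\in\mathbb R^r$, $\lambda>0$. $\Theta(x)=f(x)+g(Ax)$, $\Phi_{+,\lambda}(u)=\sum_{i=1}^r\lambda_i\mathbf 1_{\{u_i>0\}}$, and problem (P) is $\min_x F(x)=\Theta(x)+\Phi_{+,\lambda}(Bx-b)$. $\partial$ denotes the limiting (Mordukhovich) subdifferential (the usual convex subdifferential for convex functions); in particular $\partial\Phi_{+,\lambda}(u)=\{z\in\mathbb R^r: z_i\in\mathbb R_+\text{ if }u_i=0,\ z_i=0\text{ otherwise}\}$. A point $x^*$ is a stationary point of (P) if $0\in\partial f(x^* )+A^\top\partial g(Ax^* )+B^\top\partial\Phi_{+,\lambda}(Bx^*-b)$. A point $x$ is a KKT point of $(\mathrm P_+)$ if there exists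 $\zeta\in\mathbb R^{|\bar J_*|}_+$ with $0\in\partial f(x)+A^\top\partial g(Ax)+B_{\bar J_*:}^\top\zeta$ and $0\le\zeta\perp(Bx-b)_{\bar J_*}\le0$, where $B_{\bar J_*:}$ is the submatrix of rows of $B$ indexed by $\bar J_*$ and $u_{\bar J_*}$ the corresponding subvector. *)

From HB Require Import structures.
From mathcomp Require Import all_boot all_order all_algebra.
From mathcomp Require Import all_classical all_reals all_analysis.
Set Implicit Arguments. Unset Strict Implicit. Unset Printing Implicit Defensive.
Import Order.TTheory GRing.Theory Num.Theory.
Import numFieldNormedType.Exports.
Local Open Scope ring_scope.

Section Defs.
Variable R : realType.

Definition ip n (u v : 'cV[R]_n) : R := \sum_(i < n) u i ord0 * v i ord0.

Local Open Scope ereal_scope.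

Definition proper_fun n (f : 'cV[R]_n -> \bar R) :=
  (forall x, f x != -oo) /\ exists x, f x \is a fin_num.

Definition convex_efun n (f : 'cV[R]_n -> \bar R) :=
  forall (x y : 'cV[R]_n) (t : R), (0 < t < 1)%R ->
    f (t *: x + (1 - t) *: y)%R <= t%:E * f x + (1 - t)%:E * f y.

Definition csubdiff n (f : 'cV[R]_n -> \bar R) (x v : 'cV[R]_n) :=
  f x \is a fin_num /\
  forall y, f x + (ip v (y - x)%R)%:E <= f y.

Definition Phi_plus r (lam : 'cV[R]_r) (u : 'cV[R]_r) : R :=
  (\sum_(i < r) (if (0 < u i ord0)%R then lam i ord0 else 0))%R.

(* limiting subdifferential of Phi_{+,lambda}, as given in the paper *)
Definition subdiff_Phi_plus r (u z : 'cV[R]_r) :=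
  forall i : 'I_r, if u i ord0 == 0%R then (0 <= z i ord0)%R else z i ord0 == 0%R.

Definition Theta n m (f : 'cV[R]_n -> \bar R) (g : 'cV[R]_m -> \bar R)
  (A : 'M[R]_(m, n)) (x : 'cV[R]_n) : \bar R := f x + g (A *m x)%R.

Definition Fobj n m r (f : 'cV[R]_n -> \bar R) (g : 'cV[R]_m -> \bar R)
  (A : 'M[R]_(m, n)) (B : 'M[R]_(r, n)) (b lam : 'cV[R]_r) (x : 'cV[R]_n) :=
  Theta f g A x + (Phi_plus lam (B *m x - b)%R)%:E.

Definition stationary n m r (f : 'cV[R]_n -> \bar R) (g : 'cV[R]_m -> \bar R)
  (A : 'M[R]_(m, n)) (B : 'M[R]_(r, n)) (b : 'cV[R]_r) (x : 'cV[R]_n) :=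
  exists (u : 'cV[R]_n) (w : 'cV[R]_m) (z : 'cV[R]_r),
    [/\ csubdiff f x u, csubdiff g (A *m x)%R w,
        subdiff_Phi_plus (B *m x - b)%R z &
        (u + A^T *m w + B^T *m z = 0)%R].

Definition Jbar n r (B : 'M[R]_(r, n)) (b : 'cV[R]_r) (xs : 'cV[R]_n)
  (i : 'I_r) : bool := ((B *m xs - b) i ord0 == 0)%R.

Definition feasible_Pplus n r (B : 'M[R]_(r, n)) (b : 'cV[R]_r)
  (xs x : 'cV[R]_n) :=
  forall i, Jbar B b xs i -> ((B *m x - b) i ord0 <= 0)%R.

(* KKT point of (P_+): the multiplier zeta in R^{|Jbar*|} is encoded as a
   vector of R^r vanishing outside Jbar*, so that B^T zeta = B_{Jbar*:}^T zeta. *)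
Definition KKT_Pplus n m r (f : 'cV[R]_n -> \bar R) (g : 'cV[R]_m -> \bar R)
  (A : 'M[R]_(m, n)) (B : 'M[R]_(r, n)) (b : 'cV[R]_r) (xs x : 'cV[R]_n) :=
  exists (u : 'cV[R]_n) (w : 'cV[R]_m) (zeta : 'cV[R]_r),
    [/\ csubdiff f x u, csubdiff g (A *m x)%R w,
        (u + A^T *m w + B^T *m zeta = 0)%R,
        (forall i, ~~ Jbar B b xs i -> zeta i ord0 = 0%R) &
        (forall i, Jbar B b xs i ->
           [/\ (0 <= zeta i ord0)%R, ((B *m x - b) i ord0 <= 0)%R &
               (zeta i ord0 * (B *m x - b) i ord0 = 0)%R])].

Definition local_min n (F : 'cV[R]_n -> \bar R) (xs : 'cV[R]_n) :=
  \forall y \near xs, F xs <= F y.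

Definition global_min_Pplus n m r (f : 'cV[R]_n -> \bar R)
  (g : 'cV[R]_m -> \bar R) (A : 'M[R]_(m, n)) (B : 'M[R]_(r, n))
  (b : 'cV[R]_r) (xs x : 'cV[R]_n) :=
  feasible_Pplus B b xs x /\
  forall y, feasible_Pplus B b xs y -> Theta f g A x <= Theta f g A y.

End Defs.

From HB Require Import structures.
From mathcomp Require Import all_boot all_order all_algebra.
From mathcomp Require Import all_classical all_reals all_analysis.
From mathcomp Require Import ring lra.
Import Order.TTheory GRing.Theory Num.Theory.
Import numFieldNormedType.Exports.
Set Implicit Arguments. Unset Strict Implicit. Unset Printing Implicit Defensive.
Local Open Scope ring_scope.

(* Part (i) only rewrites the subdifferential of Phi_{+,lambda} at B x^* - b:
   its elements are exactly the multipliers vanishing off Jbar_* and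
   nonnegative on Jbar_*, complementarity being automatic since B x^* - b
   vanishes on Jbar_*.
   For part (ii), every entry of B x - b outside Jbar_* keeps its sign near x^*,
   so near x^* the penalty Phi_{+,lambda}(B x - b) equals its value at x^* at
   points feasible for (P_+) and exceeds it by some lambda_i > 0 at infeasible
   ones.  A local minimizer of F is therefore a local minimizer of the convex
   program (P_+), hence a global one; conversely, lower semicontinuity keeps
   Theta above Theta x^* - lambda_i near x^*, which the jump of the penalty
   compensates. *)

Section matrix_continuity.
Context {R : realType}.

Lemma continuous_mx_entries (T : topologicalType) m p (F : T -> 'M[R]_(m, p)) :
  (forall i j, continuous (fun x => F x i j)) -> continuous F.
Proof.
move=> Fc x; apply/(@cvg_ballP _ _ _ _ (nbhs_filter x)) => e e0.
have Fij i j : \forall y \near x, ball (F x i j) e (F y i j).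
  exact: (cvg_ballP _ _).1 (Fc i j x) e e0.
have := @filter_forall _ _ _ _ (nbhs_filter x)
  (fun i => @filter_forall _ _ _ _ (nbhs_filter x) (Fij i)).
by apply: filterS => y Fy; split.
Qed.

Lemma continuous_mulmx m n p (A : 'M[R]_(m, n)) :
  continuous (fun x : 'M[R]_(n, p) => A *m x).
Proof.
apply: continuous_mx_entries => i j.
have -> : (fun x : 'M[R]_(n, p) => (A *m x) i j) =
    (fun x => \sum_k A i k * x k j) by apply/funext => x; rewrite mxE.
apply: (continuous_big add_continuous) => k _ x.
apply: continuousM; [exact: cst_continuous | exact: coord_continuous].
Qed.

End matrix_continuity.

Arguments continuous_mulmx {R m n p} A.

Section constraint_pattern.
Variables (R : realType) (n r : nat) (B : 'M[R]_(r, n)) (b : 'cV[R]_r).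
Variable xs : 'cV[R]_n.

Definition same_pos_off_Jbar (z : 'cV[R]_n) :=
  forall i, ~~ Jbar B b xs i ->
    (0 < (B *m z - b) i ord0) = (0 < (B *m xs - b) i ord0).

Lemma feasible_Pplus_self : feasible_Pplus B b xs xs.
Proof. by move=> i /eqP ->. Qed.

Lemma feasible_Pplus_convex (x y : 'cV[R]_n) (t : R) : 0 < t < 1 ->
  feasible_Pplus B b xs x -> feasible_Pplus B b xs y ->
  feasible_Pplus B b xs (t *: x + (1 - t) *: y).
Proof.
move=> /andP[t0 t1] fx fy i Ji.
have -> : (B *m (t *: x + (1 - t) *: y) - b) i ord0 =
    t * (B *m x - b) i ord0 + (1 - t) * (B *m y - b) i ord0.
  by rewrite mulmxDr -!scalemxAr !mxE; ring.
have := fx i Ji; have := fy i Ji; nra.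
Qed.

Lemma near_same_pos_off_Jbar : \forall z \near xs, same_pos_off_Jbar z.
Proof.
apply: (@filter_forall _ _ _ _ (nbhs_filter xs)) => i.
have [Ji|nJi] := boolP (Jbar B b xs i); first by apply: nearW.
have Bc : continuous (fun z : 'cV[R]_n => (B *m z - b) i ord0).
  rewrite (_ : (fun z => _) =
    (fun M : 'cV[R]_r => M i ord0) \o (fun z => B *m z - b)) //.
  move=> z; apply: continuous_comp; last exact: coord_continuous.
  by apply: continuousB; [exact: continuous_mulmx | exact: cst_continuous].
case: (ltgtP 0 ((B *m xs - b) i ord0)) => [pos|neg|zero].
- apply: filterS (@cvgr_gt _ _ _ (nbhs_filter xs) _ _ (Bc xs) 0 pos).
  by move=> z ->.
- apply: filterS (@cvgr_lt _ _ _ (nbhs_filter xs) _ _ (Bc xs) 0 neg).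
  by move=> z /lt_gtF.
- by move: nJi; rewrite /Jbar -zero eqxx.
Qed.

Lemma Phi_plus_feasible (lam : 'cV[R]_r) (z : 'cV[R]_n) :
  feasible_Pplus B b xs z -> same_pos_off_Jbar z ->
  Phi_plus lam (B *m z - b) = Phi_plus lam (B *m xs - b).
Proof.
move=> fz sz; apply: eq_bigr => i _.
have [Ji|nJi] := boolP (Jbar B b xs i); last by rewrite sz.
by rewrite (le_gtF (fz i Ji)) (eqP Ji) ltxx.
Qed.

Lemma Phi_plus_infeasible (lam : 'cV[R]_r) (z : 'cV[R]_n) i0 :
  (forall i, 0 < lam i ord0) -> same_pos_off_Jbar z ->
  Jbar B b xs i0 -> 0 < (B *m z - b) i0 ord0 ->
  Phi_plus lam (B *m xs - b) + lam i0 ord0 <= Phi_plus lam (B *m z - b).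
Proof.
move=> lam0 sz Ji0 zi0.
rewrite -lerBrDl /Phi_plus -sumrB (bigD1 i0) //=.
move: (Ji0) => /eqP ->; rewrite ltxx zi0 subr0 lerDl.
apply: sumr_ge0 => i _.
have [/eqP ->|nJi] := boolP (Jbar B b xs i); last by rewrite sz // subrr.
by rewrite ltxx subr0; case: ifP => // _; exact: ltW.
Qed.

Lemma subdiff_Phi_plusP (z : 'cV[R]_r) :
  subdiff_Phi_plus (B *m xs - b) z <->
  (forall i, ~~ Jbar B b xs i -> z i ord0 = 0) /\
  (forall i, Jbar B b xs i -> [/\ 0 <= z i ord0,
     (B *m xs - b) i ord0 <= 0 & z i ord0 * (B *m xs - b) i ord0 = 0]).
Proof.
split=> [hz|[off on] i].
  split=> i; have := hz i; rewrite /Jbar.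
    by move=> + /negbTE nJi; rewrite nJi => /eqP.
  by move=> + Ji; rewrite Ji (eqP Ji) mulr0.
by rewrite /Jbar in off on *; case: ifP => [/on[]|/negbT/off ->].
Qed.

End constraint_pattern.

Arguments feasible_Pplus_self {R n r} B b xs.

Local Open Scope ereal_scope.

Section convex_local_global.
Variables (R : realType) (n : nat).

Lemma convex_local_min_global (h : 'cV[R]_n -> \bar R) (C : set 'cV[R]_n)
    (xs : 'cV[R]_n) :
  convex_efun h -> (forall x, h x != -oo) -> h xs \is a fin_num ->
  (forall y t, C y -> (0 < t < 1)%R -> C (t *: y + (1 - t) *: xs)%R) ->
  (\forall y \near xs, C y -> h xs <= h y) ->
  forall y, C y -> h xs <= h y.
Proof.
move=> hc hN hxs Cstar hloc y Cy.
have [e /= e0 he] := (nbhs_ballP _ _).1 hloc.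
case Ehy: (h y) => [c| |]; [|by rewrite leey|by move: (hN y); rewrite Ehy].
move: hxs; case Ehx: (h xs) => [a| |] // _.
pose d := `|y - xs|%R.
have d0 : (0 <= d)%R by exact: normr_ge0.
pose t := (e / (2 * (d + e)))%R.
have de0 : (0 < 2 * (d + e))%R by lra.
have t01 : (0 < t < 1)%R.
  by rewrite divr_gt0 //= ltr_pdivrMr // mul1r; lra.
have near_xs : ball xs e (t *: y + (1 - t) *: xs)%R.
  rewrite -ball_normE /ball_ /=.
  have -> : (xs - (t *: y + (1 - t) *: xs) = t *: (xs - y))%R.
    by apply/matrixP => i j; rewrite !mxE; ring.
  rewrite normrZ gtr0_norm ?(andP t01).1 // distrC -/d.
  by rewrite /t mulrAC ltr_pdivrMr //; nra.
have := le_trans (he _ near_xs (Cstar y t Cy t01)) (hc y xs t t01).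
rewrite Ehy Ehx -!EFinM -EFinD !lee_fin => ineq.
by move: t01 => /andP[t0 _]; nra.
Qed.

End convex_local_global.

Section Theta_properties.
Variables (R : realType) (n m : nat).
Variables (f : 'cV[R]_n -> \bar R) (g : 'cV[R]_m -> \bar R) (A : 'M[R]_(m, n)).
Hypotheses (fN : forall x, f x != -oo) (gN : forall y, g y != -oo).

Lemma Theta_neq_ninfty x : Theta f g A x != -oo.
Proof. by rewrite /Theta adde_eq_ninfty negb_or fN gN. Qed.

Lemma convex_Theta :
  convex_efun f -> convex_efun g -> convex_efun (Theta f g A).
Proof.
move=> cf cg x y t t01.
have def (u v : \bar R) : u != -oo -> v != -oo -> u +? v.
  by move=> uN vN; apply: ltninfty_adde_def; rewrite inE /= ltNye.
rewrite /Theta mulmxDr -!scalemxAr !muleDr ?def // addeACA.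
exact: leeD (cf x y t t01) (cg (A *m x) (A *m y) t t01).
Qed.

End Theta_properties.

Section Theta_lsc.
Variables (R : realType) (n m : nat).
Variables (f : 'cV[R]_n -> \bar R) (g : 'cV[R]_m -> \bar R) (A : 'M[R]_(m, n)).
Hypotheses (fN : forall x, f x != -oo) (gN : forall y, g y != -oo).
Hypotheses (lf : lower_semicontinuous f) (lg : lower_semicontinuous g).

Lemma Theta_near_gt (x : 'cV[R]_n) (a : R) :
  Theta f g A x < +oo -> a%:E < Theta f g A x ->
  \forall z \near x, a%:E < Theta f g A z.
Proof.
have := fN x; have := gN (A *m x); rewrite /Theta.
case Ef: (f x) => [p| |] //; case Eg: (g (A *m x)) => [q| |] // _ _ _.
rewrite -EFinD lte_fin => apq.
pose d := ((p + q - a) / 2)%R.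
have [|V1 xV1 fV1] := @lf x (p - d)%R.
  by rewrite Ef lte_fin /d; lra.
have [|V2 AxV2 gV2] := @lg (A *m x) (q - d)%R.
  by rewrite Eg lte_fin /d; lra.
have xV2 : nbhs x (fun z => V2 (A *m z)) := continuous_mulmx A x _ AxV2.
apply: filterS2 xV1 xV2 => z zV1 zV2.
apply: le_lt_trans (lteD (fV1 z zV1) (gV2 _ zV2)).
by rewrite -EFinD lee_fin /d; lra.
Qed.

End Theta_lsc.

Section Pplus.
Variables (R : realType) (n m r : nat).
Variables (f : 'cV[R]_n -> \bar R) (g : 'cV[R]_m -> \bar R) (A : 'M[R]_(m, n)).
Variables (B : 'M[R]_(r, n)) (b lam : 'cV[R]_r) (xs : 'cV[R]_n).

Lemma stationary_iff_KKT_Pplus :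
  stationary f g A B b xs <-> KKT_Pplus f g A B b xs xs.
Proof.
split=> [[u [w [z [fu gw /subdiff_Phi_plusP[off on] opt]]]]|].
  by exists u, w, z.
move=> [u [w [z [fu gw opt off on]]]].
by exists u, w, z; split=> //; apply/subdiff_Phi_plusP.
Qed.

Lemma local_min_Fobj_local_min_Pplus : local_min (Fobj f g A B b lam) xs ->
  \forall y \near xs, feasible_Pplus B b xs y ->
    Theta f g A xs <= Theta f g A y.
Proof.
move=> xs_min; apply: filterS2 xs_min (near_same_pos_off_Jbar B b xs).
move=> y Fxs_le sy fy.
by move: Fxs_le; rewrite /Fobj (Phi_plus_feasible lam fy sy) leeD2rE.
Qed.

Lemma global_min_Pplus_local_min_Fobj :
  (forall x, f x != -oo) -> (forall y, g y != -oo) ->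
  lower_semicontinuous f -> lower_semicontinuous g ->
  (forall i, 0 < lam i ord0)%R -> Theta f g A xs < +oo ->
  global_min_Pplus f g A B b xs xs -> local_min (Fobj f g A B b lam) xs.
Proof.
move=> fN gN lf lg lam0 Txs_fin [_ Txs_min].
have [th Eth] : exists th, Theta f g A xs = th%:E.
  move: Txs_fin (Theta_neq_ninfty A fN gN xs).
  by case: (Theta f g A xs) => [th| |] // _ _; exists th.
have Tz_gt : \forall z \near xs, forall i,
    (th - lam i ord0)%:E < Theta f g A z.
  apply: (@filter_forall _ _ _ _ (nbhs_filter xs)) => i.
  apply: Theta_near_gt => //; rewrite Eth lte_fin; have := lam0 i; lra.
apply: filterS2 (near_same_pos_off_Jbar B b xs) Tz_gt => z sz Tz.
rewrite /Fobj Eth.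
have [/forallP feas|/forallPn[i]] :=
  boolP [forall i, Jbar B b xs i ==> ((B *m z - b) i ord0 <= 0)%R].
  have fz : feasible_Pplus B b xs z by move=> i; exact/implyP.
  by rewrite (Phi_plus_feasible lam fz sz) leeD2r // -Eth Txs_min.
rewrite negb_imply -ltNge => /andP[Ji zi].
have -> : th%:E + (Phi_plus lam (B *m xs - b))%:E =
    (th - lam i ord0)%:E + (Phi_plus lam (B *m xs - b) + lam i ord0)%:E.
  by rewrite -!EFinD; congr _%:E; ring.
apply: leeD; first exact: ltW.
by rewrite lee_fin; exact: Phi_plus_infeasible.
Qed.

End Pplus.

Theorem mainTheorem10 (R : realType) (n m r : nat)
  (f : 'cV[R]_n -> \bar R) (g : 'cV[R]_m -> \bar R)
  (A : 'M[R]_(m, n)) (B : 'M[R]_(r, n)) (b lam : 'cV[R]_r)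
  (xs : 'cV[R]_n) :
  proper_fun f -> lower_semicontinuous f -> convex_efun f ->
  proper_fun g -> lower_semicontinuous g -> convex_efun g ->
  (forall i, 0 < lam i ord0)%R ->
  Theta f g A xs < +oo ->
  (stationary f g A B b xs <-> KKT_Pplus f g A B b xs xs) /\
  (local_min (Fobj f g A B b lam) xs <-> global_min_Pplus f g A B b xs xs).
Proof.
move=> [fN _] lf cf [gN _] lg cg lam0 Txs_fin.
split; first exact: stationary_iff_KKT_Pplus.
split=> [xs_min|]; last exact: global_min_Pplus_local_min_Fobj.
split=> [|y]; first exact: feasible_Pplus_self.
apply: (convex_local_min_global (convex_Theta A fN gN cf cg)).
- exact: Theta_neq_ninfty.
- by rewrite fin_numE Theta_neq_ninfty // -ltey.
- move=> z t fz t01.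
  exact: feasible_Pplus_convex t01 fz (feasible_Pplus_self B b xs).
- exact: local_min_Fobj_local_min_Pplus xs_min.
Qed.
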